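(* Let $A\subset\mathbb{R}^d$ be a finite set that minimally surrounds the origin. (i) For any critical simplex $X\subseteq A$, no point of $A\setminus X$ lies in the linear hull of $X$. (ii) If a critical simplex $X\subseteq A$ contains $k$ points of a critical $k$-simplex $Y\subseteq A$, then $X=Y$.
   Context: A point set in $\mathbb{R}^d$ surrounds the origin if the origin lies in the interior of its convex hull; it minimally surrounds the origin if it surrounds the origin but no proper subset does. A point set $S$ surrounds the origin in a linear subspace $E$ if $S$ spans $E$ and the origin lies in the relative interior of $\mathrm{conv}(S)$. A $k$-simplex is a set of $k+1$ affinely independent points; a simplex $N$ is critical if it surrounds the origin in its linear hull. *)

From HB Require Import structures.
From mathcomp Require Import all_boot all_order all_algebra.
From mathcomp Require Import reals.
Set Implicit Arguments. Unset Strict Implicit. Unset Printing Implicit Defensive.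
Import Order.TTheory GRing.Theory Num.Theory.
Local Open Scope ring_scope.

Definition in_conv (R : realType) (d : nat) (S : seq 'rV[R]_d) (x : 'rV[R]_d) :=
  exists l : 'rV[R]_d -> R,
    [/\ forall v, v \in S -> 0 <= l v,
        \sum_(v <- undup S) l v = 1
      & x = \sum_(v <- undup S) l v *: v].

Definition in_lin (R : realType) (d : nat) (S : seq 'rV[R]_d) (x : 'rV[R]_d) :=
  exists l : 'rV[R]_d -> R, x = \sum_(v <- undup S) l v *: v.

Definition small (R : realType) (d : nat) (e : R) (y : 'rV[R]_d) :=
  forall i : 'I_d, `|y ord0 i| < e.

Definition surrounds (R : realType) (d : nat) (S : seq 'rV[R]_d) :=
  exists2 e : R, 0 < e & forall y, small e y -> in_conv S y.

Definition min_surrounds (R : realType) (d : nat) (S : seq 'rV[R]_d) :=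
  surrounds S /\
  forall B : seq 'rV[R]_d, {subset B <= S} -> ~ {subset S <= B} -> ~ surrounds B.

Definition surrounds_in (R : realType) (d : nat) (S : seq 'rV[R]_d)
  (E : 'rV[R]_d -> Prop) :=
  (forall x, E x <-> in_lin S x) /\
  exists2 e : R, 0 < e & forall y, E y -> small e y -> in_conv S y.

Definition aff_indep (R : realType) (d : nat) (S : seq 'rV[R]_d) :=
  forall l : 'rV[R]_d -> R,
    \sum_(v <- S) l v = 0 -> \sum_(v <- S) l v *: v = 0 ->
    forall v, v \in S -> l v = 0.

Definition simplex (R : realType) (d : nat) (k : nat) (S : seq 'rV[R]_d) :=
  [/\ uniq S, size S = k.+1 & aff_indep S].

Definition is_simplex (R : realType) (d : nat) (S : seq 'rV[R]_d) :=
  uniq S /\ aff_indep S.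

Definition critical (R : realType) (d : nat) (S : seq 'rV[R]_d) :=
  is_simplex S /\ surrounds_in S (in_lin S).

From mathcomp Require Import all_boot all_order all_algebra.
From mathcomp Require Import reals.
From mathcomp Require Import ring lra.
Import Order.TTheory GRing.Theory Num.Theory.
Set Implicit Arguments.
Unset Strict Implicit.
Unset Printing Implicit Defensive.

Local Open Scope ring_scope.

(* A critical simplex X has a positive barycentric representation of the
   origin.  Part (i): if some other point a of A were in the linear hull of X,
   a small multiple of a would be a convex combination of X; substituting it
   for a in any convex representation over A, and padding with the positive
   representation of 0 over X, shows that A without a still surrounds the
   origin, against minimality.  Part (ii): if Y is critical and all but one
   point y of Y lie in X, the positive representation of 0 over Y puts y in
   the linear hull of X, so by (i) y is in X; then Y is contained in X and
   uniqueness of barycentric coordinates in X forces X = Y. *)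

Lemma big_mem_cond (T : eqType) (V : nmodType) (U X : seq T) (F : T -> V) :
  uniq U -> uniq X -> {subset X <= U} ->
  \sum_(v <- U) (if v \in X then F v else 0) = \sum_(v <- X) F v.
Proof.
move=> uU uX sXU; rewrite -big_mkcond /= -big_filter; apply: perm_big.
apply: uniq_perm; [exact: filter_uniq | exact: uX | ].
by move=> v; rewrite mem_filter andb_idr // => /sXU.
Qed.

Lemma big_mem_condZ (R : pzRingType) (V : lmodType R) (U X : seq V) (f : V -> R) :
  uniq U -> uniq X -> {subset X <= U} ->
  \sum_(v <- U) (if v \in X then f v else 0) *: v = \sum_(v <- X) f v *: v.
Proof.
move=> uU uX sXU; rewrite -(@big_mem_cond _ _ U X (fun v => f v *: v) uU uX sXU).
by apply: eq_bigr => v _; case: ifP; rewrite ?scale0r.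
Qed.

Section Barycentric.

Variables (R : realType) (d : nat).
Implicit Types (X Y A B : seq 'rV[R]_d) (x y a : 'rV[R]_d).

Lemma aff_indep_coef_eq X (l1 l2 : 'rV[R]_d -> R) :
  aff_indep X -> \sum_(v <- X) l1 v = \sum_(v <- X) l2 v ->
  \sum_(v <- X) l1 v *: v = \sum_(v <- X) l2 v *: v ->
  forall v, v \in X -> l1 v = l2 v.
Proof.
move=> aiX s1 s2 v vX; apply/eqP; rewrite -subr_eq0; apply/eqP.
apply: (aiX (fun v => l1 v - l2 v)) => //; first by rewrite sumrB s1 subrr.
rewrite (eq_bigr (fun v => l1 v *: v - l2 v *: v)) ?sumrB ?s2 ?subrr // => i _.
by rewrite scalerBl.
Qed.

Lemma exists_small_scale (e : R) y :
  0 < e -> exists t : R, [/\ 0 < t, t <= 1 & small e (t *: y)].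
Proof.
move=> e0; set M := \sum_(i < d) `|y ord0 i|.
have M0 : 0 <= M by apply: sumr_ge0 => i _.
have eM0 : 0 < e + M by lra.
have tp : 0 < e / (e + M) by rewrite divr_gt0.
have eME : e / (e + M) * (e + M) = e by rewrite divfK // gt_eqF.
exists (e / (e + M)); split => //; first by nra.
move=> i; rewrite mxE normrM (gtr0_norm tp).
have : `|y ord0 i| <= M by rewrite /M (bigD1 i) //= lerDl sumr_ge0.
nra.
Qed.

Lemma in_linZ X (c : R) x : in_lin X x -> in_lin X (c *: x).
Proof.
case=> l ->; exists (fun v => c * l v); rewrite scaler_sumr.
by apply: eq_bigr => v _; rewrite scalerA.
Qed.

Lemma in_lin_mem X x : x \in X -> in_lin X x.
Proof.
move=> xX; exists (fun v => if v \in [:: x] then 1 else 0).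
rewrite big_mem_condZ ?undup_uniq // ?big_seq1 ?scale1r //.
by move=> v; rewrite mem_seq1 => /eqP->; rewrite mem_undup.
Qed.

(* Uniqueness of barycentric coordinates makes the weights of 0 coincide with
   the renormalised weights of (nu + t [x0]), where nu represents -t x0. *)
Lemma critical_pos_weights X : critical X ->
  exists mu : 'rV[R]_d -> R, [/\ forall v, v \in X -> 0 < mu v,
     \sum_(v <- X) mu v = 1 & \sum_(v <- X) mu v *: v = 0].
Proof.
case=> [[uX aiX] [_ [e e0 He]]].
have [lam [lam0 lam1 lamE]] : in_conv X 0.
  apply: He; last by move=> i; rewrite mxE normr0.
  by exists (fun _ => 0); rewrite big1 // => v _; rewrite scale0r.
rewrite (undup_id uX) in lam1 lamE.
exists lam; split => // x0 x0X.
have [t [t0 _ st]] := exists_small_scale (- x0) e0.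
have [nu [nu0 nu1 nuE]] : in_conv X (t *: - x0).
  by apply: He => //; rewrite -scaleN1r; do 2!apply: in_linZ; exact: in_lin_mem.
rewrite (undup_id uX) in nu1 nuE.
have sx : {subset [:: x0] <= X} by move=> v; rewrite mem_seq1 => /eqP->.
pose dt v : R := if v \in [:: x0] then t else 0.
pose l2 v := (nu v + dt v) / (1 + t).
have t1 : 1 + t != 0 by rewrite gt_eqF //; lra.
have -> : lam x0 = l2 x0.
  apply: (aff_indep_coef_eq aiX _ _ x0X).
    by rewrite lam1 -mulr_suml big_split /= big_mem_cond // big_seq1 nu1 divff.
  rewrite -lamE (eq_bigr (fun v => (1 + t)^-1 *: (nu v *: v + dt v *: v))); last first.
    by move=> v _; rewrite -scalerDl scalerA mulrC.
  by rewrite -scaler_sumr big_split /= big_mem_condZ // big_seq1 -nuE scalerN addNr scaler0.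
by rewrite /l2 /dt mem_seq1 eqxx divr_gt0 //; have := nu0 x0 x0X; lra.
Qed.

Lemma critical_uniq X : critical X -> uniq X.
Proof. by case=> [[]]. Qed.

Lemma critical_aff_indep X : critical X -> aff_indep X.
Proof. by case=> [[]]. Qed.

(* A positive combination of 0 over X absorbs the missing mass. *)
Lemma in_conv_pad B X (mu l : 'rV[R]_d -> R) :
  {subset X <= B} -> uniq X ->
  (forall v, v \in X -> 0 <= mu v) -> \sum_(v <- X) mu v = 1 ->
  \sum_(v <- X) mu v *: v = 0 ->
  (forall v, v \in B -> 0 <= l v) -> \sum_(v <- undup B) l v <= 1 ->
  in_conv B (\sum_(v <- undup B) l v *: v).
Proof.
move=> XB uX mu0 mu1 muE l0 l1.
have XU : {subset X <= undup B} by move=> v /XB; rewrite mem_undup.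
pose r := 1 - \sum_(v <- undup B) l v.
have r0 : 0 <= r by rewrite subr_ge0.
exists (fun v => l v + (if v \in X then r * mu v else 0)); split.
- move=> v vB; rewrite addr_ge0 ?l0 //.
  by case: ifP => // vX; rewrite mulr_ge0 ?mu0.
- by rewrite big_split /= big_mem_cond ?undup_uniq // -mulr_sumr mu1 mulr1 addrC subrK.
- rewrite [RHS](eq_bigr (fun v => l v *: v + (if v \in X then r * mu v else 0) *: v))
    => [|v _]; last by rewrite scalerDl.
  rewrite big_split /= big_mem_condZ ?undup_uniq //.
  rewrite [Z in _ = _ + Z](eq_bigr (fun v => r *: (mu v *: v))) => [|v _];
    last by rewrite scalerA.
  by rewrite -scaler_sumr muE scaler0 addr0.
Qed.

(* The weight of a is moved onto X through the convex representation of c a. *)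
Lemma in_conv_remove_point A X a (c : R) (nu lam : 'rV[R]_d -> R) :
  a \in A -> {subset X <= A} -> a \notin X -> uniq X ->
  (forall v, v \in X -> 0 <= nu v) -> \sum_(v <- X) nu v = 1 ->
  \sum_(v <- X) nu v *: v = c *: a -> 0 <= c <= 1 ->
  (forall v, v \in A -> 0 <= lam v) -> \sum_(v <- undup A) lam v = 1 ->
  exists l : 'rV[R]_d -> R,
    [/\ forall v, v \in [seq v <- A | v != a] -> 0 <= l v,
        \sum_(v <- undup [seq v <- A | v != a]) l v <= 1
      & \sum_(v <- undup [seq v <- A | v != a]) l v *: v
          = c *: \sum_(v <- undup A) lam v *: v].
Proof.
move=> aA XA aX uX nu0 nu1 nuE /andP[c0 c1] lam0 lam1.
rewrite -filter_undup; set W := [seq v <- undup A | v != a].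
have uW : uniq W by rewrite filter_uniq ?undup_uniq.
have XW : {subset X <= W}.
  by move=> v vX; rewrite mem_filter mem_undup XA // andbT; apply: contraNneq aX => <-.
have aU : a \in undup A by rewrite mem_undup.
have splitA (F : 'rV[R]_d -> 'rV[R]_d) :
    \sum_(v <- undup A) F v = F a + \sum_(v <- W) F v.
  by rewrite (bigD1_seq a aU (undup_uniq A)) /= big_filter.
have lamW : \sum_(v <- W) lam v = 1 - lam a.
  rewrite -lam1 (bigD1_seq a aU (undup_uniq A)) /= big_filter.
  by rewrite addrC addrK.
have lama0 : 0 <= lam a by apply: lam0.
have lama1 : lam a <= 1.
  rewrite -lam1 (bigD1_seq a aU (undup_uniq A)) /= lerDl big_seq_cond sumr_ge0 //.
  by move=> v /andP[]; rewrite mem_undup => /lam0.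
exists (fun v => c * lam v + (if v \in X then lam a * nu v else 0)); split.
- move=> v; rewrite mem_filter => /andP[_ vA].
  rewrite addr_ge0 ?mulr_ge0 ?lam0 //.
  by case: ifP => // vX; rewrite mulr_ge0 ?nu0.
- rewrite big_split /= -mulr_sumr lamW big_mem_cond // -mulr_sumr nu1; nra.
- rewrite (eq_bigr (fun v =>
      c *: (lam v *: v) + (if v \in X then lam a * nu v else 0) *: v)) => [|v _];
    last by rewrite scalerDl scalerA.
  rewrite big_split /= big_mem_condZ //.
  rewrite [Z in _ + Z = _](eq_bigr (fun v => lam a *: (nu v *: v))) => [|v _];
    last by rewrite scalerA.
  rewrite -!scaler_sumr nuE (splitA (fun v => lam v *: v)) scalerDr addrC.
  by rewrite !scalerA mulrC.
Qed.

Lemma min_surrounds_not_in_lin A X a :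
  min_surrounds A -> {subset X <= A} -> critical X ->
  a \in A -> a \notin X -> ~ in_lin X a.
Proof.
move=> [[eA eA0 HA] minA] XA cX aA aX aXlin.
have [mu [mu0 mu1 muE]] := critical_pos_weights cX.
have uX := critical_uniq cX.
case: cX => [_ [_ [e e0 He]]].
have [c [c0 c1 sc]] := exists_small_scale a e0.
have [nu [nu0 nu1 nuE]] : in_conv X (c *: a) by apply: He => //; apply: in_linZ.
rewrite (undup_id uX) in nu1 nuE.
have XB : {subset X <= [seq v <- A | v != a]}.
  by move=> v vX; rewrite mem_filter XA // andbT; apply: contraNneq aX => <-.
apply: (minA [seq v <- A | v != a]).
- by move=> v; rewrite mem_filter => /andP[].
- by move=> /(_ a aA); rewrite mem_filter eqxx.
exists (eA * c) => [|y sy]; first by rewrite mulr_gt0.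
have [lam [lam0 lam1 lamE]] : in_conv A (c^-1 *: y).
  apply: HA => i; rewrite mxE normrM gtr0_norm ?invr_gt0 // mulrC ltr_pdivrMr //.
have c01 : 0 <= c <= 1 by rewrite c1 ltW.
have [l [l0 l1 lE]] := in_conv_remove_point aA XA aX uX nu0 nu1 (esym nuE) c01 lam0 lam1.
rewrite -[y](scalerKV (_ : c != 0)) ?gt_eqF // lamE -lE.
by apply: (in_conv_pad XB uX _ mu1 muE) => // v /mu0 /ltW.
Qed.

Lemma critical_sub_eq X Y : critical X -> critical Y -> {subset Y <= X} -> X =i Y.
Proof.
move=> cX cY YX; have [muX [muX0 muX1 muXE]] := critical_pos_weights cX.
have [muY [_ muY1 muYE]] := critical_pos_weights cY.
have uX := critical_uniq cX; have uY := critical_uniq cY.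
suff XY : {subset X <= Y} by move=> v; apply/idP/idP => [/XY|/YX].
move=> x xX; apply/negPn/negP => xY; have := muX0 x xX.
have -> : muX x = (if x \in Y then muY x else 0).
  apply: (aff_indep_coef_eq (l2 := fun v => if v \in Y then muY v else 0)
    (critical_aff_indep cX) _ _ xX).
    by rewrite muX1 big_mem_cond.
  by rewrite muXE big_mem_condZ.
by rewrite (negbTE xY) ltxx.
Qed.

(* Solve the positive dependence over Y for its vertex y. *)
Lemma critical_in_lin_rem X Y y :
  critical Y -> y \in Y -> {subset rem y Y <= X} -> in_lin X y.
Proof.
move=> cY yY remX; have [mu [mu0 _ muE]] := critical_pos_weights cY.
have uR : uniq (rem y Y) := rem_uniq y (critical_uniq cY).
have remU : {subset rem y Y <= undup X} by move=> v /remX; rewrite mem_undup.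
exists (fun v => if v \in rem y Y then - (mu v / mu y) else 0).
rewrite big_mem_condZ ?undup_uniq //.
have remE : \sum_(v <- rem y Y) mu v *: v = - (mu y *: y).
  apply/eqP; rewrite -addr_eq0 addrC.
  by rewrite (perm_big _ (perm_to_rem yY)) big_cons in muE; rewrite muE.
rewrite (eq_bigr (fun v => - (mu y)^-1 *: (mu v *: v))) => [|v _]; last first.
  by rewrite scalerA mulNr mulrC.
by rewrite -scaler_sumr remE scalerN scaleNr opprK scalerA mulVf ?scale1r ?gt_eqF ?mu0.
Qed.

End Barycentric.

Lemma count_all_but_one (T : eqType) (P : pred T) (s : seq T) :
  ((size s).-1 <= count P s)%N ->
  all P s \/ exists y, [/\ y \in s, ~~ P y & all P (rem y s)].
Proof.
have [|] := boolP (all P s); first by left.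
rewrite -has_predC => /hasP[y ys /= Py]; right; exists y; split => //.
have cnt : count P s = count P (rem y s).
  by rewrite (permP (perm_to_rem ys)) /= (negbTE Py).
by rewrite all_count eqn_leq count_size size_rem // -cnt.
Qed.

Theorem lemma16 (R : realType) (d : nat) (A : seq 'rV[R]_d) :
  min_surrounds A ->
  (forall X : seq 'rV[R]_d, {subset X <= A} -> critical X ->
     forall a, a \in A -> a \notin X -> ~ in_lin X a) /\
  (forall (X Y : seq 'rV[R]_d) (k : nat),
     {subset X <= A} -> critical X ->
     {subset Y <= A} -> simplex k Y -> critical Y ->
     (k <= count (mem X) Y)%N ->
     X =i Y).
Proof.
move=> minA; have notlin := min_surrounds_not_in_lin minA.
split=> [X XA cX a|X Y k XA cX YA [_ szY _] cY kY]; first exact: notlin.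
have : ((size Y).-1 <= count (mem X) Y)%N by rewrite szY; exact: kY.
case/count_all_but_one => [/allP YX | [y [yY yX /allP remX]]].
- exact: critical_sub_eq.
- by case: (notlin X y XA cX (YA y yY) yX); exact: critical_in_lin_rem cY yY remX.
Qed.
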